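(* For any commutative ring $k$, the $k$-algebras $M_\infty$, $\Gamma$ and $\Sigma$ are flat as $k$-modules.
   Context: $\Gamma$ is the $k$-algebra of $\mathbb{N}\times\mathbb{N}$ matrices over $k$ with finitely many distinct entries and a uniform bound $n_A$ on the number of nonzero entries in each row and each column; $M_\infty\subset\Gamma$ is the two-sided ideal of matrices with finitely many nonzero entries; $\Sigma:=\Gamma/M_\infty$. *)

From Stdlib Require List.
From HB Require Import structures.
From mathcomp Require Import all_boot all_order all_algebra.
Set Implicit Arguments. Unset Strict Implicit. Unset Printing Implicit Defensive.
Import Order.TTheory GRing.Theory Num.Theory.
Local Open Scope ring_scope.

Section Defs.
Variable k : comPzRingType.

Definition infmx := nat -> nat -> k.
Definition mxadd (A B : infmx) : infmx := fun i j => A i j + B i j.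
Definition mxscale (a : k) (A : infmx) : infmx := fun i j => a * A i j.
Definition mxzero : infmx := fun _ _ => 0.

(* Gamma: finitely many distinct entries, and a uniform bound n_A on the
   number of nonzero entries in each row and in each column. *)
Definition in_Gamma (A : infmx) : Prop :=
  (exists s : seq k, forall i j, A i j \in s) /\
  (exists nA : nat,
     (forall i (s : seq nat), uniq s -> (forall j, j \in s -> A i j != 0) ->
        (size s <= nA)%N) /\
     (forall j (s : seq nat), uniq s -> (forall i, i \in s -> A i j != 0) ->
        (size s <= nA)%N)).

Definition in_Minf (A : infmx) : Prop :=
  exists s : seq (nat * nat), forall i j, A i j != 0 -> (i, j) \in s.

Definition is_zeromx (A : infmx) : Prop := forall i j, A i j = 0.

(* k-bilinear maps  N x (P/Q) -> X, where P/Q is the subquotient of the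
   k-module infmx given by submodules Q <= P; such maps are represented by
   functions N -> infmx -> X which are linear in the first argument, linear in
   the second argument on P, and vanish when the second argument lies in Q. *)
Definition bilin_on (P Q : infmx -> Prop) (N X : lmodType k)
    (B : N -> infmx -> X) : Prop :=
  (forall (v : infmx), P v -> forall (a : k) (n1 n2 : N),
      B (a *: n1 + n2) v = a *: B n1 v + B n2 v) /\
  (forall (n : N) (a : k) (v1 v2 : infmx), P v1 -> P v2 ->
      B n (mxadd (mxscale a v1) v2) = a *: B n v1 + B n v2) /\
  (forall (n : N) (v : infmx), Q v -> B n v = 0).

(* The element  sum_{p in s} p.1 (x) [p.2]  of the tensor product N (x)_k (P/Q)
   is zero.  An element of a tensor product is zero iff it is killed by every
   bilinear map (the tensor product being the universal bilinear target). *)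
Definition tensor_zero (P Q : infmx -> Prop) (N : lmodType k)
    (s : seq (N * infmx)) : Prop :=
  forall (X : lmodType k) (B : N -> infmx -> X), bilin_on P Q B ->
    \sum_(p <- s) B p.1 p.2 = 0.

Definition flat_subquot (P Q : infmx -> Prop) : Prop :=
  forall (N' N : lmodType k) (f : {linear N' -> N}), injective f ->
  forall s : seq (N' * infmx), (forall p, List.In p s -> P p.2) ->
    tensor_zero P Q [seq (f p.1, p.2) | p <- s] -> tensor_zero P Q s.

End Defs.

(* Given finitely many finitely-valued matrices v_1, ..., v_m, the profile
   (i, j) |-> (v_1 i j, ..., v_m i j) takes finitely many values, so each v_p
   is a combination of the 0/1 indicators E_t of the level sets of the nonzero
   profiles t; these stay in M_infinity (resp. Gamma).  Hence
   sum_p n_p (x) v_p = sum_t c_t (x) E_t with c_t = sum_p t_p n_p.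
   Both 0 and M_infinity are the matrices vanishing near a filter on N x N
   (the trivial and the cofinite one).  If sum_p f(n_p) (x) v_p = 0, the
   bilinear map into germs of N-valued matrices along that filter shows that
   (i, j) |-> f(c_t(i,j)) vanishes near the filter; so for each t either c_t = 0
   (f is injective) or E_t itself vanishes near the filter, and in both cases
   c_t (x) E_t is already zero before applying f. *)
From HB Require Import structures.
From mathcomp Require Import all_boot all_order all_algebra ring_quotient.
From mathcomp Require Import boolp classical_sets functions cardinality filter.
Set Implicit Arguments. Unset Strict Implicit. Unset Printing Implicit Defensive.
Import GRing.Theory Quotient.
Local Open Scope ring_scope.
Local Open Scope classical_set_scope.
Local Open Scope quotient_scope.

Lemma mem_In (T : eqType) (x : T) (s : seq T) : x \in s -> List.In x s.
Proof. by elim: s => //= y s IH; rewrite inE => /orP[/eqP ->|/IH]; [left | right]. Qed.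

Definition vanishes_near (F : filter_on (nat * nat)) (V : zmodType)
    (A : nat -> nat -> V) : Prop :=
  \forall x \near F, A x.1 x.2 = 0.

Section Germs.
Variables (F : filter_on (nat * nat)) (R : pzRingType) (V : lmodType R).

Definition eventually_zero : {pred nat -> nat -> V} :=
  fun A => `[< vanishes_near F A >].

Lemma eventually_zero_zmod_closed : zmod_closed eventually_zero.
Proof.
split; first by apply/asboolP; apply: nearW.
move=> A B /asboolP A0 /asboolP B0; apply/asboolP.
by apply: filterS2 A0 B0 => x A0 B0; rewrite -[LHS]/(A x.1 x.2 - B x.1 x.2) A0 B0 subrr.
Qed.

HB.instance Definition _ :=
  GRing.isZmodClosed.Build _ eventually_zero eventually_zero_zmod_closed.

Lemma eventually_zero_scaler_closed : GRing.scaler_closed eventually_zero.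
Proof.
move=> a A /asboolP A0; apply/asboolP.
by apply: filterS A0 => x A0; rewrite -[LHS]/(a *: A x.1 x.2) A0 scaler0.
Qed.

Local Notation germ := {quot eventually_zero}.

Definition scale_germ (a : R) := lift_op1 germ (GRing.scale a).

Lemma pi_scale_germ a : {morph \pi_germ : A / a *: A >-> scale_germ a A}.
Proof.
move=> A; unlock scale_germ; apply/eqP; rewrite piE /equiv.
by rewrite -scalerBr eventually_zero_scaler_closed // idealrBE reprK.
Qed.
Canonical pi_scale_germ_morph a := PiMorph1 (pi_scale_germ a).

Lemma scale_germA a b (x : germ) : scale_germ a (scale_germ b x) = scale_germ (a * b) x.
Proof. by rewrite -[x]reprK !piE scalerA. Qed.

Lemma scale_germ1 : left_id 1 scale_germ.
Proof. by move=> x; rewrite -[x]reprK !piE scale1r. Qed.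

Lemma scale_germDr : right_distributive scale_germ +%R.
Proof. by move=> a x y; rewrite -[x]reprK -[y]reprK !piE scalerDr. Qed.

Lemma scale_germDl (x : germ) : {morph scale_germ^~ x : a b / a + b}.
Proof. by move=> a b; rewrite -[x]reprK !piE scalerDl. Qed.

HB.instance Definition _ := GRing.Zmodule_isLmodule.Build R germ
  scale_germA scale_germ1 scale_germDr scale_germDl.

Lemma pi_germZ a (A : nat -> nat -> V) : \pi_germ (a *: A) = a *: \pi_germ A.
Proof. exact: pi_scale_germ. Qed.

Lemma pi_germ_eq0 (A : nat -> nat -> V) : \pi_germ A = 0 <-> vanishes_near F A.
Proof.
rewrite -(raddf0 \pi_germ); split; first by move/eqP; rewrite -idealrBE subr0 => /asboolP.
by move=> A0; apply/eqP; rewrite -idealrBE subr0; apply/asboolP.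
Qed.

End Germs.
Arguments eventually_zero F {R} V.

Section LevelSets.
Variables (k : comPzRingType) (vs : seq (infmx k)).

Definition profile i j : seq k := [seq v i j | v <- vs].

Definition level (t : seq k) : infmx k := fun i j => (profile i j == t)%:R.

(* When t is not a profile, the witness is a junk point, harmless since
   level t is then zero everywhere. *)
Definition witness (t : seq k) : nat * nat :=
  xget (0%N, 0%N) [set x | profile x.1 x.2 = t].

Lemma profile_witness i j :
  profile (witness (profile i j)).1 (witness (profile i j)).2 = profile i j.
Proof. by apply: (@xgetPex _ _ [set x | profile x.1 x.2 = _]); exists (i, j). Qed.

Lemma eq_profile_entry v i j i' j' :
  v \in vs -> profile i j = profile i' j' -> v i j = v i' j'.
Proof.
rewrite /profile; elim: vs => //= w ws IH; rewrite inE => /orP[/eqP-> [] //|].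
by move=> ws_v [_ /(IH ws_v)].
Qed.

Lemma entry_witness v i j :
  v \in vs -> v (witness (profile i j)).1 (witness (profile i j)).2 = v i j.
Proof. by move=> vs_v; apply: eq_profile_entry vs_v (profile_witness i j). Qed.

Lemma profile_eq0 v i j :
  v \in vs -> ~~ has (fun a => a != 0) (profile i j) -> v i j = 0.
Proof. by move=> vs_v /hasPn/(_ _ (map_f _ vs_v))/negPn/eqP. Qed.

Lemma level_neq0 t i j : has (fun a => a != 0) t -> level t i j != 0 ->
  has (fun v => v i j != 0) vs.
Proof.
rewrite /level; have [<- nz_t _|] := eqVneq (profile i j) t; last by rewrite eqxx.
by move: nz_t; rewrite has_map.
Qed.

Lemma finite_profiles : (forall v, v \in vs -> exists s : seq k, forall i j, v i j \in s) ->
  exists T : seq (seq k), forall i j, profile i j \in T.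
Proof.
rewrite /profile; elim: vs => [|w ws IH] fin_vs; first by exists [:: [::]].
have [s ws_s] := fin_vs w (mem_head _ _).
have [T ws_T] : exists T : seq (seq k), forall i j, [seq v i j | v <- ws] \in T.
  by apply: IH => v ws_v; apply: fin_vs; rewrite inE ws_v orbT.
exists [seq a :: t | a <- s, t <- T] => i j.
exact: (allpairs_f (fun a t => a :: t) (ws_s i j) (ws_T i j)).
Qed.

Lemma level_decomposition (T : seq (seq k)) v i j : v \in vs -> uniq T ->
  (forall i j, has (fun a => a != 0) (profile i j) -> profile i j \in T) ->
  v i j = \sum_(t <- T) v (witness t).1 (witness t).2 * level t i j.
Proof.
move=> vs_v uT T_nz; have [nz|z] := boolP (has (fun a => a != 0) (profile i j)).
  rewrite (bigD1_seq _ (T_nz i j nz) uT) /= big1 => [|t /negbTE nt].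
    by rewrite /level eqxx mulr1 addr0 entry_witness.
  by rewrite /level eq_sym nt mulr0.
rewrite (profile_eq0 vs_v z) big1 // => t _; rewrite /level.
have [<-|_] := eqVneq (profile i j) t; last by rewrite mulr0.
by rewrite entry_witness // (profile_eq0 vs_v z) mul0r.
Qed.

End LevelSets.

Section BilinearOn.
Variables (k : comPzRingType) (P Q : infmx k -> Prop).
Hypotheses (P0 : P (@mxzero k))
  (Plin : forall a v1 v2, P v1 -> P v2 -> P (mxadd (mxscale a v1) v2)).

Definition mxcomb (cs : seq (k * infmx k)) : infmx k :=
  foldr (fun c A => mxadd (mxscale c.1 c.2) A) (@mxzero k) cs.

Lemma mxcombE cs i j : mxcomb cs i j = \sum_(c <- cs) c.1 * c.2 i j.
Proof. by elim: cs => [|c cs IH]; rewrite ?big_nil ?big_cons //= /mxadd /mxscale IH. Qed.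

Lemma mxcomb_closed cs : (forall c, c \in cs -> P c.2) -> P (mxcomb cs).
Proof.
elim: cs => //= c cs IH Pcs; apply: Plin; first exact/Pcs/mem_head.
by apply: IH => d cs_d; apply: Pcs; rewrite inE cs_d orbT.
Qed.

Variables (N X : lmodType k) (B : N -> infmx k -> X).
Hypothesis B_bilin : bilin_on P Q B.

Lemma bilin_on_0l v : P v -> B 0 v = 0.
Proof.
have [Bl _] := B_bilin; move=> Pv.
by have := Bl v Pv 1 0 0; rewrite scaler0 addr0 scale1r -{1}[B 0 v]addr0 => /addrI.
Qed.

Lemma bilin_on_suml v (I : Type) (r : seq I) (F : I -> N) : P v ->
  B (\sum_(i <- r) F i) v = \sum_(i <- r) B (F i) v.
Proof.
have [Bl _] := B_bilin; move=> Pv.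
elim: r => [|i r IH]; first by rewrite !big_nil bilin_on_0l.
by rewrite !big_cons -IH -[in RHS](scale1r (B (F i) v)) -Bl // scale1r.
Qed.

Lemma bilin_on_scalel v a n : P v -> B (a *: n) v = a *: B n v.
Proof.
move=> Pv; have [Bl _] := B_bilin.
by rewrite -[a *: n]addr0 Bl // bilin_on_0l // addr0.
Qed.

Lemma bilin_on_0r n : B n (@mxzero k) = 0.
Proof.
have [_ [Br _]] := B_bilin.
have := Br n 1 _ _ P0 P0; rewrite scale1r (_ : mxadd _ _ = @mxzero k).
  by rewrite -{1}[B n _]addr0 => /addrI.
by apply: funext => i; apply: funext => j; rewrite /mxadd /mxscale /mxzero mulr0 addr0.
Qed.

Lemma bilin_on_comb n cs : (forall c, c \in cs -> P c.2) ->
  B n (mxcomb cs) = \sum_(c <- cs) c.1 *: B n c.2.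
Proof.
have [_ [Br _]] := B_bilin.
elim: cs => [|c cs IH] Pcs /=; first by rewrite big_nil bilin_on_0r.
have Pcs' : forall d, d \in cs -> P d.2 by move=> d cs_d; apply: Pcs; rewrite inE cs_d orbT.
rewrite Br ?IH ?big_cons //; [exact: Pcs (mem_head _ _) | exact: mxcomb_closed].
Qed.

Lemma bilin_on_level_expansion vs (T : seq (seq k)) n v :
  (forall t, t \in T -> P (level vs t)) -> uniq T ->
  (forall i j, has (fun a => a != 0) (profile vs i j) -> profile vs i j \in T) ->
  v \in vs ->
  B n v = \sum_(t <- T) B (v (witness vs t).1 (witness vs t).2 *: n) (level vs t).
Proof.
move=> P_T uT T_prof vs_v.
rewrite {1}(_ : v = mxcomb [seq (v (witness vs t).1 (witness vs t).2, level vs t) | t <- T]).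
  rewrite bilin_on_comb; last by move=> _ /mapP[t T_t ->]; exact: P_T.
  by rewrite big_map; apply: eq_big_seq => t T_t; rewrite bilin_on_scalel //; exact: P_T.
apply: funext => i; apply: funext => j.
by rewrite mxcombE big_map (level_decomposition _ _ vs_v uT T_prof).
Qed.

End BilinearOn.

Section FlatnessCriterion.
Variables (k : comPzRingType) (F : filter_on (nat * nat)) (P : infmx k -> Prop).

Definition mxtensor (N : lmodType k) (n : N) (A : infmx k) : nat -> nat -> N :=
  fun i j => A i j *: n.

Lemma tensor_zero_vanishes_near (N : lmodType k) (s : seq (N * infmx k)) :
  tensor_zero P (@vanishes_near F k) s ->
  vanishes_near F (fun i j => \sum_(p <- s) p.2 i j *: p.1).
Proof.
pose B n A := \pi_{quot eventually_zero F N} (mxtensor n A).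
have B_bilin : bilin_on P (@vanishes_near F k) B.
  split; [|split].
  - move=> v _ a n1 n2; rewrite /B -pi_germZ -raddfD; congr \pi.
    apply: funext => i; apply: funext => j.
    by rewrite /mxtensor -[RHS]/(a *: (v i j *: n1) + v i j *: n2) scalerDr !scalerA mulrC.
  - move=> n a v1 v2 _ _; rewrite /B -pi_germZ -raddfD; congr \pi.
    apply: funext => i; apply: funext => j.
    by rewrite /mxtensor -[RHS]/(a *: (v1 i j *: n) + v2 i j *: n) scalerA -scalerDl.
  - move=> n v v0; apply/pi_germ_eq0; apply: filterS v0 => x v0.
    by rewrite -[LHS]/(v x.1 x.2 *: n) v0 scale0r.
move=> /(_ _ B B_bilin); rewrite -raddf_sum => /pi_germ_eq0.
congr vanishes_near; apply: funext => i; apply: funext => j.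
by rewrite fct_sumE fct_sumE.
Qed.

Lemma level_coefficient_dichotomy (N' N : lmodType k) (f : {linear N' -> N})
    (s : seq (N' * infmx k)) t :
  injective f -> tensor_zero P (@vanishes_near F k) [seq (f p.1, p.2) | p <- s] ->
  let w := witness (map snd s) t in
  \sum_(p <- s) p.2 w.1 w.2 *: p.1 = 0 \/ vanishes_near F (level (map snd s) t).
Proof.
move=> f_inj /tensor_zero_vanishes_near s0 w.
have {}s0 : \forall x \near F, \sum_(p <- s) p.2 x.1 x.2 *: p.1 = 0.
  apply: filterS s0 => x; rewrite big_map /= => fs0; apply: f_inj.
  by rewrite linear0 linear_sum -[RHS]fs0; apply: eq_bigr => p _; rewrite linearZ.
have [->|c_neq0] := eqVneq (\sum_(p <- s) p.2 w.1 w.2 *: p.1) 0; [by left | right].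
apply: filterS s0 => x s0; rewrite /level; case: eqP => // prof_x.
case/eqP: c_neq0; rewrite -[RHS]s0; apply: eq_big_seq => p s_p; congr (_ *: _).
by rewrite /w -prof_x entry_witness // map_f.
Qed.

Hypotheses (P0 : P (@mxzero k))
  (Plin : forall a v1 v2, P v1 -> P v2 -> P (mxadd (mxscale a v1) v2))
  (P_finite_range : forall v, P v -> exists s : seq k, forall i j, v i j \in s)
  (P_level : forall vs t, (forall v, v \in vs -> P v) ->
     has (fun a => a != 0) t -> P (level vs t)).

Theorem flat_subquot_vanishes_near : flat_subquot P (@vanishes_near F k).
Proof.
move=> N' N f f_inj s Ps s0 X B B_bilin.
set vs := map snd s.
have P_vs v : v \in vs -> P v by case/mapP=> p /mem_In/Ps + ->.
have [T0 T0_prof] := finite_profiles (fun v vs_v => P_finite_range (P_vs v vs_v)).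
set T := undup [seq t <- T0 | has (fun a => a != 0) t].
have T_nz t : t \in T -> has (fun a => a != 0) t.
  by rewrite mem_undup mem_filter => /andP[].
have P_T t : t \in T -> P (level vs t) by move/T_nz; exact: P_level.
have T_prof i j : has (fun a => a != 0) (profile vs i j) -> profile vs i j \in T.
  by move=> nz; rewrite mem_undup mem_filter nz T0_prof.
rewrite (eq_big_seq _ (fun p s_p => bilin_on_level_expansion P0 Plin B_bilin p.1
  P_T (undup_uniq _) T_prof (map_f snd s_p))).
rewrite exchange_big big1_seq // => t /andP[_ T_t].
rewrite -(bilin_on_suml B_bilin); last exact: P_T.
have [->|lev0] := level_coefficient_dichotomy t f_inj s0.
  by rewrite (bilin_on_0l B_bilin) //; exact: P_T.
by case: B_bilin => _ [_ ->].
Qed.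

End FlatnessCriterion.

Definition rows_bounded (r : nat -> pred nat) (n : nat) :=
  forall i (s : seq nat), uniq s -> (forall j, j \in s -> r i j) -> (size s <= n)%N.

Lemma rows_bounded0 (r : nat -> pred nat) : (forall i j, ~~ r i j) -> rows_bounded r 0.
Proof. by move=> r0 i [|j s] //= _ /(_ j (mem_head _ _)); rewrite (negbTE (r0 i j)). Qed.

Lemma rows_bounded_sub (r r' : nat -> pred nat) n :
  (forall i j, r' i j -> r i j) -> rows_bounded r n -> rows_bounded r' n.
Proof. by move=> r'r r_n i s us s_r'; apply: (r_n i s us) => j /s_r' /r'r. Qed.

Lemma rows_boundedU (r1 r2 : nat -> pred nat) n1 n2 :
  rows_bounded r1 n1 -> rows_bounded r2 n2 ->
  rows_bounded (fun i j => r1 i j || r2 i j) (n1 + n2).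
Proof.
move=> r1_n1 r2_n2 i s us s_r; rewrite -(count_predC (r1 i)) -!size_filter leq_add //.
  by apply: (r1_n1 i _ (filter_uniq _ us)) => j; rewrite mem_filter => /andP[].
apply: (r2_n2 i _ (filter_uniq _ us)) => j; rewrite mem_filter => /andP[/= /negbTE r1_ij /s_r].
by rewrite r1_ij.
Qed.

Section MatrixClasses.
Variable k : comPzRingType.
Implicit Types (v : infmx k) (vs : seq (infmx k)).

Lemma mxadd_mxscale_neq0 a v1 v2 i j : mxadd (mxscale a v1) v2 i j != 0 ->
  has (fun v => v i j != 0) [:: v1; v2].
Proof.
rewrite /mxadd /mxscale /= orbF; have [->|//] := eqVneq (v1 i j) 0.
by rewrite mulr0 add0r.
Qed.

Lemma in_Minf0 : in_Minf (@mxzero k).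
Proof. by exists [::] => i j; rewrite eqxx. Qed.

Lemma in_Minf_has vs : (forall v, v \in vs -> in_Minf v) ->
  exists s : seq (nat * nat), forall i j, has (fun v => v i j != 0) vs -> (i, j) \in s.
Proof.
elim: vs => [|w vs IH] Minf_vs; first by exists [::].
have [s1 w_s1] := Minf_vs w (mem_head _ _).
have [|s2 vs_s2] := IH; first by move=> v vs_v; apply: Minf_vs; rewrite inE vs_v orbT.
by exists (s1 ++ s2) => i j /orP[/w_s1|/vs_s2]; rewrite mem_cat => ->; rewrite ?orbT.
Qed.

Lemma in_Minf_lin a v1 v2 : in_Minf v1 -> in_Minf v2 -> in_Minf (mxadd (mxscale a v1) v2).
Proof.
move=> Minf1 Minf2; have [|s vs_s] := @in_Minf_has [:: v1; v2].
  by move=> v; rewrite !inE => /orP[|] /eqP ->.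
by exists s => i j /mxadd_mxscale_neq0 /vs_s.
Qed.

Lemma in_Minf_finite_range v : in_Minf v -> exists s : seq k, forall i j, v i j \in s.
Proof.
move=> [s v_s]; exists (0 :: [seq v x.1 x.2 | x <- s]) => i j; rewrite inE.
by have [//|/v_s s_ij] := eqVneq (v i j) 0; rewrite (map_f (fun x => v x.1 x.2) s_ij) orbT.
Qed.

Lemma in_Minf_level vs t : (forall v, v \in vs -> in_Minf v) ->
  has (fun a => a != 0) t -> in_Minf (level vs t).
Proof.
by move=> /in_Minf_has [s vs_s] nz_t; exists s => i j /(level_neq0 nz_t) /vs_s.
Qed.

Lemma in_Gamma0 : in_Gamma (@mxzero k).
Proof.
split; first by exists [:: 0] => i j; rewrite inE.
by exists 0%N; split; apply: rows_bounded0 => i j; rewrite eqxx.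
Qed.

Lemma in_Gamma_finite_range v : in_Gamma v -> exists s : seq k, forall i j, v i j \in s.
Proof. by case. Qed.

Lemma in_Gamma_has vs : (forall v, v \in vs -> in_Gamma v) ->
  exists n, rows_bounded (fun i j => has (fun v => v i j != 0) vs) n /\
            rows_bounded (fun j i => has (fun v => v i j != 0) vs) n.
Proof.
elim: vs => [|w vs IH] Gamma_vs; first by exists 0%N; split; exact: rows_bounded0.
have [_ [n1 [row1 col1]]] := Gamma_vs w (mem_head _ _).
have [|n2 [row2 col2]] := IH; first by move=> v vs_v; apply: Gamma_vs; rewrite inE vs_v orbT.
by exists (n1 + n2)%N; split; apply: rows_boundedU.
Qed.

Lemma in_Gamma_lin a v1 v2 : in_Gamma v1 -> in_Gamma v2 -> in_Gamma (mxadd (mxscale a v1) v2).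
Proof.
move=> Gamma1 Gamma2; have [[s1 v1_s1] _] := Gamma1; have [[s2 v2_s2] _] := Gamma2.
have [|n [row col]] := @in_Gamma_has [:: v1; v2].
  by move=> v; rewrite !inE => /orP[|] /eqP ->.
split; first by exists [seq a * x + y | x <- s1, y <- s2] => i j; exact: allpairs_f.
by exists n; split; [apply: rows_bounded_sub row | apply: rows_bounded_sub col] => ? ?;
  exact: mxadd_mxscale_neq0.
Qed.

Lemma in_Gamma_level vs t : (forall v, v \in vs -> in_Gamma v) ->
  has (fun a => a != 0) t -> in_Gamma (level vs t).
Proof.
move=> /in_Gamma_has [n [row col]] nz_t.
split; first by exists [:: 0; 1] => i j; rewrite /level; case: eqP; rewrite !inE eqxx ?orbT.
by exists n; split; [apply: rows_bounded_sub row | apply: rows_bounded_sub col] => ? ?;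
  exact: level_neq0.
Qed.

End MatrixClasses.

Definition cofinite_on : filter_on (nat * nat) :=
  FilterType (@frechet_filter _) (frechet_properfilter infinite_prod_nat).

Lemma is_zeromxE (k : comPzRingType) :
  @is_zeromx k = @vanishes_near (trivial_filter_on _) k.
Proof.
apply: funext => A; apply: propext; rewrite /vanishes_near near_filter_onE nearE /=; split.
  by move=> A0; apply: funext => x; apply: propext; split.
by move=> A0 i j; have : setT (i, j) by []; rewrite -A0.
Qed.

Lemma in_MinfE (k : comPzRingType) : @in_Minf k = @vanishes_near cofinite_on k.
Proof.
apply: funext => A; apply: propext; rewrite /vanishes_near near_filter_onE nearE /=; split.
  move=> [s A_s]; apply: sub_finite_set (finite_seq s) => -[i j] /= /eqP.
  exact: A_s.
case/finite_seqP => s A_s; exists s => i j /eqP Aij.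
by have : (~` [set x | A x.1 x.2 = 0]) (i, j) by []; rewrite A_s.
Qed.

Theorem lemma3p9 (k : comPzRingType) :
  flat_subquot (@in_Minf k) (@is_zeromx k) /\
  flat_subquot (@in_Gamma k) (@is_zeromx k) /\
  flat_subquot (@in_Gamma k) (@in_Minf k).
Proof.
have flat_Minf F : flat_subquot (@in_Minf k) (@vanishes_near F k).
  exact: (flat_subquot_vanishes_near (F := F) (@in_Minf0 k) (@in_Minf_lin k)
    (@in_Minf_finite_range k) (@in_Minf_level k)).
have flat_Gamma F : flat_subquot (@in_Gamma k) (@vanishes_near F k).
  exact: (flat_subquot_vanishes_near (F := F) (@in_Gamma0 k) (@in_Gamma_lin k)
    (@in_Gamma_finite_range k) (@in_Gamma_level k)).
rewrite is_zeromxE [X in _ /\ _ /\ flat_subquot _ X]in_MinfE.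
by split; [|split].
Qed.
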